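(* Let $\lambda>0$, $f:\mathbb{R}^n\to\mathbb{R}$ twice continuously differentiable, $\varphi=f+\lambda\|\cdot\|_1$, and $x^0$ with $\mathcal{L}_\varphi(x^0)$ bounded and $f$ twice uniformly Lipschitz continuously differentiable on an open neighborhood of it. Suppose that at iteration $k$ of PGN2CM (described in the context) a Newton-CG step is invoked and the Capped CG method returns $d_{\rm type}=\mathrm{NC}$. Then $j_k<+\infty$ and $$\varphi(x^k)-\varphi(x^{k+1})\ge c_{nc}\min\{\varepsilon_g\varepsilon_h,\varepsilon_h^3\},\qquad c_{nc}=\eta\theta^2\min\Big\{1,\frac{9(1-2\eta)^2}{L_H^2}\Big\}.$$
   Context: Constants: $L_g,L_H>0$ with, for $x,y\in\mathcal{L}_\varphi(x^0)=\{x:\varphi(x)\le\varphi(x^0)\}$, $\|\nabla^2f(x)\|\le L_g$ and $f(y)\le f(x)+\nabla f(x)^\top(y-x)+\frac12(y-x)^\top\nabla^2f(x)(y-x)+\frac{L_H}6\|y-x\|^3$. $\mathrm{sgn}(0)=1$. For $x$: $I^\varepsilon_0=\{i:|x_i|\le\varepsilon_g^{1/2}\}$, $I^\varepsilon_{\neq0}=\{i:|x_i|>\varepsilon_g^{1/2}\}$; $g^\varepsilon(x)_i=(\nabla f(x))_i+\lambda$ if $x_i>\varepsilon_g^{1/2}$, $(\nabla f(x))_i-\lambda$ if $x_i<-\varepsilon_g^{1/2}$, $(\nabla f(x))_i-\min\{\max\{-\lambda-\varepsilon_g^{3/4},(\nabla f(x))_i\},\lambda+\varepsilon_g^{3/4}\}$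 otherwise. Capped CG (inputs symmetric $H$, $g$, $\epsilon$, $\zeta\in(0,1)$, $\delta$, $\bar\tau$, $M\ge0$): $\bar H=H+\bar\tau\|g\|^\delta I$, $\kappa=\frac{M+\bar\tau\|g\|^\delta}\epsilon$, $\hat\zeta=\frac\zeta{3\kappa}$, $\tau=\frac{\sqrt\kappa}{\sqrt\kappa+1}$, $T=\frac{4\kappa^4}{(1-\sqrt\tau)^2}$, $y_0=0,r_0=g,p_0=-g$; if $p_0^\top\bar Hp_0<\epsilon\|p_0\|^2$ return $(p_0,\mathrm{NC})$; if $\|Hp_0\|>M\|p_0\|$ update $M=\|Hp_0\|/\|p_0\|$ and $\kappa,\hat\zeta,\tau,T$. Loop: $\alpha_j=\|r_j\|^2/p_j^\top\bar Hp_j$, $y_{j+1}=y_j+\alpha_jp_j$, $r_{j+1}=r_j+\alpha_j\bar Hp_j$, $\beta_{j+1}=\|r_{j+1}\|^2/\|r_j\|^2$, $p_{j+1}=-r_{j+1}+\beta_{j+1}p_j$, $j\leftarrow j+1$; update $M$ (and dependent quantities) whenever $\|Hv\|>M\|v\|$ for $v\in\{p_j,y_j,r_j\}$; then if $y_j^\top\bar Hy_j<\epsilon\|y_j\|^2$ return $(y_j,\mathrm{NC})$; elif $\|r_j\|\le\hat\zeta\|r_0\|$ return $(y_j,\mathrm{SOL})$; elif $p_j^\top\bar Hp_j<\epsilon\|p_j\|^2$ return $(p_j,\mathrm{NC})$; elif $\|r_j\|>\sqrt T\tau^{j/2}\|r_0\|$, compute $y_{j+1}$, find $i<j$ with $(y_{j+1}-y_i)^\top\bar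 H(y_{j+1}-y_i)<\epsilon\|y_{j+1}-y_i\|^2$ and return $(y_{j+1}-y_i,\mathrm{NC})$. Newton-CG step of PGN2CM (parameters $0<\varepsilon_g,\varepsilon_h<1$, $\delta\in[0,1]$, $\hat\tau\ge1$, $\zeta\in(0,1)$, $\eta\in(0,\frac{1-\zeta}2)$, $\theta\in(0,1)$), invoked at $x^k$ when [$I^\varepsilon_0(x^k)=\emptyset$ or $g^\varepsilon(x^k)$ vanishes on $I^\varepsilon_0(x^k)$], $I^\varepsilon_{\neq0}(x^k)\neq\emptyset$ and $\|g^\varepsilon(x^k)_{I^\varepsilon_{\neq0}(x^k)}\|>\varepsilon_g$: with $H^k_{\neq0\varepsilon}=(\nabla^2f(x^k))_{I^\varepsilon_{\neq0}(x^k)}$, $g^k_{\neq0\varepsilon}=g^\varepsilon(x^k)_{I^\varepsilon_{\neq0}(x^k)}$, $\tau_k\in[\frac{2\varepsilon_h}{\|g^k_{\neq0\varepsilon}\|^\delta},\frac{2\hat\tau\varepsilon_h}{\|g^k_{\neq0\varepsilon}\|^\delta}]$, call Capped CG$(H^k_{\neq0\varepsilon},g^k_{\neq0\varepsilon},\varepsilon_h,\zeta,\delta,\tau_k,M)$ to get $(d,d_{\rm type})$; set $d^k=0$ on $I^\varepsilon_0(x^k)$ and $d^k_{I^\varepsilon_{\neq0}(x^k)}=-\mathrm{sgn}(d^\top g^k_{\neq0\varepsilon})\frac{|d^\top H^k_{\neq0\varepsilon}d|}{\|d\|^2}\frac d{\|d\|}$ if $d_{\rm type}=\mathrm{NC}$,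 $=d$ if SOL; $x^{k+1}=x^k+\theta^{j_k}d^k$ with $j_k$ the smallest nonnegative integer $j$ such that $\varphi(x^k+\theta^jd^k)<\varphi(x^k)-\eta\theta^{2j}\varepsilon_h\|d^k\|^2$. The iterates lie in $\mathcal{L}_\varphi(x^0)$. *)

From HB Require Import structures.
From mathcomp Require Import all_boot all_order all_algebra.
From mathcomp Require Import all_classical all_reals all_analysis.
Set Implicit Arguments.
Unset Strict Implicit.
Unset Printing Implicit Defensive.
Import Order.TTheory GRing.Theory Num.Theory.
Import numFieldNormedType.Exports.
Local Open Scope ring_scope.

Definition dotv (R : realType) (m : nat) (u v : 'cV[R]_m) : R :=
  \sum_(i < m) u i ord0 * v i ord0.

Definition enorm (R : realType) (m : nat) (v : 'cV[R]_m) : R :=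
  Num.sqrt (dotv v v).

Definition l1norm (R : realType) (m : nat) (v : 'cV[R]_m) : R :=
  \sum_(i < m) `|v i ord0|.

Definition opnorm_le (R : realType) (m : nat) (A : 'M[R]_m) (c : R) : Prop :=
  forall v : 'cV[R]_m, enorm (A *m v) <= c * enorm v.

(* sgn with the convention sgn(0) = 1 *)
Definition sgn (R : realType) (a : R) : R := if 0 <= a then 1 else -1.

Definition subvec (R : realType) (n : nat) (I : {set 'I_n}) (v : 'cV[R]_n)
  : 'cV[R]_#|I| := \col_(k < #|I|) v (enum_val k) ord0.

Definition submx_sq (R : realType) (n : nat) (I : {set 'I_n}) (A : 'M[R]_n)
  : 'M[R]_#|I| := \matrix_(k < #|I|, l < #|I|) A (enum_val k) (enum_val l).

Definition evec (R : realType) (n : nat) (i : 'I_n) : 'cV[R]_n :=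
  delta_mx i ord0.

Definition grad (R : realType) (n : nat) (f : 'cV[R]_n -> R) (x : 'cV[R]_n)
  : 'cV[R]_n := \col_(i < n) derive f x (evec R i).

Definition hess (R : realType) (n : nat) (f : 'cV[R]_n -> R) (x : 'cV[R]_n)
  : 'M[R]_n :=
  \matrix_(i < n, j < n) derive (fun y => grad f y i ord0) x (evec R j).

Definition C2 (R : realType) (n : nat) (f : 'cV[R]_n -> R) : Prop :=
  [/\ forall x, differentiable f x,
      forall (i : 'I_n) x, differentiable (fun y => grad f y i ord0) x &
      forall i j : 'I_n, continuous (fun x => hess f x i j)].

(* Capped CG (relational semantics of one run of the algorithm).       *)

Inductive dtype := NC | SOL.

(* state after iteration j: y_0,...,y_j (in order), y_j, r_j, p_j, M *)
Record ccg_state (R : realType) (m : nat) := CCGState {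
  st_j : nat;
  st_ys : seq 'cV[R]_m;
  st_y : 'cV[R]_m;
  st_r : 'cV[R]_m;
  st_p : 'cV[R]_m;
  st_M : R }.

Section CappedCG.
Variables (R : realType) (m : nat) (H : 'M[R]_m) (g : 'cV[R]_m)
          (eps zeta delta taubar : R).

Definition ccg_shift : R := taubar * powR (enorm g) delta.
Definition ccg_Hbar : 'M[R]_m := H + (ccg_shift)%:M.
Definition ccg_kappa (M : R) : R := (M + ccg_shift) / eps.
Definition ccg_zetahat (M : R) : R := zeta / (3 * ccg_kappa M).
Definition ccg_tau (M : R) : R :=
  Num.sqrt (ccg_kappa M) / (Num.sqrt (ccg_kappa M) + 1).
Definition ccg_T (M : R) : R :=
  4 * ccg_kappa M ^+ 4 / (1 - Num.sqrt (ccg_tau M)) ^+ 2.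

Definition ccg_updM (M : R) (v : 'cV[R]_m) : R :=
  if M * enorm v < enorm (H *m v) then enorm (H *m v) / enorm v else M.

Definition ccg_nc (v : 'cV[R]_m) : Prop :=
  dotv v (ccg_Hbar *m v) < eps * enorm v ^+ 2.

Definition ccg_alpha (r p : 'cV[R]_m) : R :=
  enorm r ^+ 2 / dotv p (ccg_Hbar *m p).

Definition ccg_step (s : ccg_state R m) : ccg_state R m :=
  let a := ccg_alpha (st_r s) (st_p s) in
  let y' := st_y s + a *: st_p s in
  let r' := st_r s + a *: (ccg_Hbar *m st_p s) in
  let b := enorm r' ^+ 2 / enorm (st_r s) ^+ 2 in
  let p' := - r' + b *: st_p s in
  let M' := ccg_updM (ccg_updM (ccg_updM (st_M s) p') y') r' in
  CCGState (st_j s).+1 (rcons (st_ys s) y') y' r' p' M'.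

(* the "slow decrease" test ||r_j|| > sqrt(T) tau^{j/2} ||r_0||  (r_0 = g) *)
Definition ccg_slow (s : ccg_state R m) : Prop :=
  Num.sqrt (ccg_T (st_M s)) * Num.sqrt (ccg_tau (st_M s) ^+ st_j s) * enorm g
    < enorm (st_r s).

Definition ccg_small (s : ccg_state R m) : Prop :=
  enorm (st_r s) <= ccg_zetahat (st_M s) * enorm g.

(* ccg_run s d t : starting the loop in state s, the algorithm
   returns (d, t) *)
Inductive ccg_run : ccg_state R m -> 'cV[R]_m -> dtype -> Prop :=
| ccg_ret_y_nc s :
    ccg_nc (st_y (ccg_step s)) ->
    ccg_run s (st_y (ccg_step s)) NC
| ccg_ret_sol s :
    ~ ccg_nc (st_y (ccg_step s)) ->
    ccg_small (ccg_step s) ->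
    ccg_run s (st_y (ccg_step s)) SOL
| ccg_ret_p_nc s :
    ~ ccg_nc (st_y (ccg_step s)) ->
    ~ ccg_small (ccg_step s) ->
    ccg_nc (st_p (ccg_step s)) ->
    ccg_run s (st_p (ccg_step s)) NC
| ccg_ret_slow s (i : nat) :
    let s' := ccg_step s in
    let ynext := st_y s' + ccg_alpha (st_r s') (st_p s') *: st_p s' in
    ~ ccg_nc (st_y s') ->
    ~ ccg_small s' ->
    ~ ccg_nc (st_p s') ->
    ccg_slow s' ->
    (i < st_j s')%N ->
    ccg_nc (ynext - nth 0 (st_ys s') i) ->
    ccg_run s (ynext - nth 0 (st_ys s') i) NC
| ccg_continue s d t :
    ~ ccg_nc (st_y (ccg_step s)) ->
    ~ ccg_small (ccg_step s) ->
    ~ ccg_nc (st_p (ccg_step s)) ->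
    ~ ccg_slow (ccg_step s) ->
    ccg_run (ccg_step s) d t ->
    ccg_run s d t.

Definition capped_cg (M0 : R) (d : 'cV[R]_m) (t : dtype) : Prop :=
  (ccg_nc (- g) /\ d = - g /\ t = NC) \/
  (~ ccg_nc (- g) /\
   ccg_run (CCGState 0 [:: 0] 0 g (- g) (ccg_updM M0 (- g))) d t).

End CappedCG.

Definition phi (R : realType) (n : nat) (f : 'cV[R]_n -> R) (lam : R)
  (x : 'cV[R]_n) : R := f x + lam * l1norm x.

Definition levelset (R : realType) (n : nat) (f : 'cV[R]_n -> R) (lam : R)
  (x0 : 'cV[R]_n) : set 'cV[R]_n := [set x | phi f lam x <= phi f lam x0].

Definition I0eps (R : realType) (n : nat) (epsg : R) (x : 'cV[R]_n)
  : {set 'I_n} := [set i | `|x i ord0| <= Num.sqrt epsg].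

Definition Inz_eps (R : realType) (n : nat) (epsg : R) (x : 'cV[R]_n)
  : {set 'I_n} := [set i | Num.sqrt epsg < `|x i ord0|].

Definition geps (R : realType) (n : nat) (f : 'cV[R]_n -> R) (lam epsg : R)
  (x : 'cV[R]_n) : 'cV[R]_n :=
  \col_(i < n)
    let gi := grad f x i ord0 in
    if Num.sqrt epsg < x i ord0 then gi + lam
    else if x i ord0 < - Num.sqrt epsg then gi - lam
    else gi - Num.min (Num.max (- lam - powR epsg (3/4)) gi)
                      (lam + powR epsg (3/4)).

(* Capped CG returns NC only for a direction [d] with
   [d^T (H + tau_k ||g||^delta I) d < eps_h ||d||^2], and [tau_k ||g||^delta >= 2 eps_h],
   so [d^T H d < - eps_h ||d||^2].  The rescaled step [d^k] then has
   [||d^k|| = |d^T H d| / ||d||^2 > eps_h], curvature [- ||d^k||^3], and, by its sign,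
   a nonpositive slope for [phi].  For [t < T = min (3 (1 - 2 eta) / L_H, sqrt eps_g / ||d^k||)]
   no coordinate of [x^k] in the support of [d^k] changes sign, so [phi] is smooth along the
   segment and the cubic upper model gives [phi (x^k + t d^k) < phi x^k - eta t^2 ||d^k||^3].
   The model may only be used inside the level set, which the segment cannot leave: the
   increase of [phi] is negative just after [0] (its second derivative there is
   [- ||d^k||^3]) and, by the model, has no zero before [T].  Backtracking therefore stops
   with [theta^(j_k) >= theta min (1, T)], which gives the bound. *)

From HB Require Import structures.
From mathcomp Require Import all_boot all_order all_algebra.
From mathcomp Require Import all_classical all_reals all_analysis.
From mathcomp Require Import ring lra.
Import Order.TTheory GRing.Theory Num.Theory.
Import numFieldNormedType.Exports.
Set Implicit Arguments.
Unset Strict Implicit.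
Unset Printing Implicit Defensive.
Local Open Scope ring_scope.

Section EuclideanGeometry.
Variables (R : realType) (m : nat).
Implicit Types (a : R) (u v w : 'cV[R]_m).

Lemma dotvC u v : dotv u v = dotv v u.
Proof. by apply: eq_bigr => i _; rewrite mulrC. Qed.

Lemma dotvZr a u v : dotv u (a *: v) = a * dotv u v.
Proof. by rewrite /dotv mulr_sumr; apply: eq_bigr => i _; rewrite mxE mulrCA. Qed.

Lemma dotvZl a u v : dotv (a *: u) v = a * dotv u v.
Proof. by rewrite dotvC dotvZr dotvC. Qed.

Lemma dotvDr u v w : dotv u (v + w) = dotv u v + dotv u w.
Proof. by rewrite /dotv -big_split; apply: eq_bigr => i _; rewrite mxE mulrDr. Qed.

Lemma dotv0l v : dotv 0 v = 0.
Proof. by rewrite /dotv big1 // => i _; rewrite mxE mul0r. Qed.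

Lemma dotv_ge0 v : 0 <= dotv v v.
Proof. by apply: sumr_ge0 => i _; rewrite -expr2 sqr_ge0. Qed.

Lemma enorm_ge0 v : 0 <= enorm v.
Proof. exact: sqrtr_ge0. Qed.

Lemma enorm_sqr v : enorm v ^+ 2 = dotv v v.
Proof. by rewrite sqr_sqrtr // dotv_ge0. Qed.

Lemma enormZ a v : enorm (a *: v) = `|a| * enorm v.
Proof.
by rewrite /enorm dotvZl dotvZr mulrA -expr2 sqrtrM ?sqr_ge0 // sqrtr_sqr.
Qed.

Lemma coord_le_enorm v i : `|v i ord0| <= enorm v.
Proof.
rewrite -(@ler_pXn2r _ 2) ?nnegrE ?enorm_ge0 // enorm_sqr real_normK ?num_real //.
rewrite /dotv (bigD1 i) //= -expr2 lerDl.
by apply: sumr_ge0 => j _; rewrite -expr2 sqr_ge0.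
Qed.

Lemma enorm_eq0 v : enorm v = 0 -> v = 0.
Proof.
move=> v0; apply/matrixP => i j; rewrite (ord1 j) mxE.
by apply/eqP; rewrite -normr_le0 -v0 coord_le_enorm.
Qed.

End EuclideanGeometry.

Definition supported (R : realType) (n : nat) (I : {set 'I_n}) (v : 'cV[R]_n) :=
  forall i, i \notin I -> v i ord0 = 0.

Section Subvectors.
Variables (R : realType) (n : nat) (I : {set 'I_n}).
Implicit Types (u v : 'cV[R]_n) (A : 'M[R]_n).

Lemma dotv_subvec u v :
  supported I v -> dotv (subvec I u) (subvec I v) = dotv u v.
Proof.
move=> hv; rewrite /dotv (bigID (mem I)) /=.
rewrite [X in _ + X]big1 ?addr0; last by move=> i /hv ->; rewrite mulr0.
rewrite (big_enum_val (fun i => u i ord0 * v i ord0)).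
by apply: eq_bigr => k _; rewrite !mxE.
Qed.

Lemma submx_sq_mul A v :
  supported I v -> submx_sq I A *m subvec I v = subvec I (A *m v).
Proof.
move=> hv; apply/matrixP => k j; rewrite (ord1 j) !mxE (bigID (mem I)) /=.
rewrite [X in _ = _ + X]big1 ?addr0; last by move=> i /hv ->; rewrite mulr0.
rewrite (big_enum_val (fun i => A (enum_val k) i * v i ord0)).
by apply: eq_bigr => l _; rewrite !mxE.
Qed.

Lemma enorm_subvec v : supported I v -> enorm (subvec I v) = enorm v.
Proof. by move=> hv; rewrite /enorm dotv_subvec. Qed.

Lemma curvature_subvec A v : supported I v ->
  dotv (subvec I v) (submx_sq I A *m subvec I v) = dotv v (A *m v).
Proof. by move=> hv; rewrite submx_sq_mul // dotvC dotv_subvec // dotvC. Qed.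

End Subvectors.

Section Sign.
Variable R : realType.
Implicit Types a b : R.

Lemma sgn_mul a : sgn a * a = `|a|.
Proof.
rewrite /sgn; case: ifPn => [/ger0_norm ->|]; first by rewrite mul1r.
by rewrite -ltNge => /ltr0_norm ->; rewrite mulN1r.
Qed.

Lemma normr_sgn a : `|sgn a| = 1.
Proof. by rewrite /sgn; case: ifP; rewrite ?normrN normr1. Qed.

Lemma normrD_small a b : `|b| < `|a| -> `|a + b| = `|a| + sgn a * b.
Proof.
rewrite /sgn ltr_norml; case: ifPn => [a0|].
  by rewrite ger0_norm // => /andP[hb _]; rewrite ger0_norm; lra.
rewrite -ltNge => a0; rewrite ltr0_norm // => /andP[_ hb].
by rewrite ltr0_norm; lra.
Qed.

End Sign.

Definition l1slope (R : realType) (n : nat) (x v : 'cV[R]_n) : R :=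
  \sum_(i < n) sgn (x i ord0) * v i ord0.

Lemma l1norm_line (R : realType) (n : nat) (x v : 'cV[R]_n) (t : R) :
  (forall i, v i ord0 != 0 -> `|t * v i ord0| < `|x i ord0|) ->
  l1norm (x + t *: v) = l1norm x + t * l1slope x v.
Proof.
move=> small; rewrite /l1norm /l1slope mulr_sumr -big_split /=.
apply: eq_bigr => i _ /=; rewrite !mxE.
have [->|vi0] := eqVneq (v i ord0) 0; first by rewrite !mulr0 !addr0.
rewrite normrD_small; last exact: small.
by rewrite mulrCA.
Qed.

Section GradientOnSupport.
Variables (R : realType) (n : nat) (f : 'cV[R]_n -> R) (lam epsg : R) (x : 'cV[R]_n).

Lemma geps_Inz i : i \in Inz_eps epsg x ->
  geps f lam epsg x i ord0 = grad f x i ord0 + lam * sgn (x i ord0).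
Proof.
rewrite inE ltr_normr => hi; rewrite mxE /=.
have sqrt_ge0 : 0 <= Num.sqrt epsg := sqrtr_ge0 _.
case: ifPn => [hpos|]; first by rewrite /sgn ifT ?mulr1 //; lra.
rewrite -leNgt => hnpos.
have hneg : x i ord0 < - Num.sqrt epsg by move: hi => /orP[]; lra.
by rewrite ifT // /sgn ifF ?mulrN1 //; apply/negbTE; rewrite -ltNge; lra.
Qed.

Lemma dotv_geps v : supported (Inz_eps epsg x) v ->
  dotv (geps f lam epsg x) v = dotv (grad f x) v + lam * l1slope x v.
Proof.
move=> hv; rewrite /dotv /l1slope mulr_sumr -big_split; apply: eq_bigr => i _ /=.
have [hi|hi] := boolP (i \in Inz_eps epsg x); last by rewrite hv // !mulr0 addr0.
by rewrite geps_Inz //; ring.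
Qed.

End GradientOnSupport.

Section DerivativesAlongLines.
Variables (R : realType) (m : nat).
Implicit Types (g : 'cV[R]_m -> R) (x y v : 'cV[R]_m).

Lemma col_sum_evec v : v = \sum_(i < m) v i ord0 *: evec R i.
Proof.
by rewrite {1}(matrix_sum_delta v); apply: eq_bigr => i _; rewrite big_ord1.
Qed.

Lemma derive_grad g y v : differentiable g y -> 'D_v g y = dotv (grad g y) v.
Proof.
move=> dg; rewrite deriveE // {1}(col_sum_evec v) linear_sum.
by apply: eq_bigr => i _; rewrite linearZ /= -deriveE // mxE mulrC.
Qed.

Lemma is_derive_line g x v (t : R) : derivable g (x + t *: v) v ->
  is_derive t (1 : R) (fun s : R => g (x + s *: v)) ('D_v g (x + t *: v)).
Proof.
move=> dg.
have quotE : (fun h : R => h^-1 *: (((fun s => g (x + s *: v)) \o shift t) (h *: 1)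
                                    - g (x + t *: v))) =
             (fun h : R => h^-1 *: ((g \o shift (x + t *: v)) (h *: v) - g (x + t *: v))).
  apply/funext => h /=; congr (_ *: (g _ - _)).
  by rewrite [_%:A]mulr1 scalerDl addrCA.
by apply: DeriveDef; rewrite /derivable /derive quotE.
Qed.

Lemma is_derive_line_grad g x v (t : R) : (forall y, differentiable g y) ->
  is_derive t (1 : R) (fun s : R => g (x + s *: v)) (dotv (grad g (x + t *: v)) v).
Proof. by move=> dg; rewrite -derive_grad //; apply/is_derive_line/diff_derivable. Qed.

Lemma is_derive_line_hess g x v :
  (forall i, differentiable (fun y => grad g y i ord0) x) ->
  is_derive (0 : R) (1 : R) (fun s : R => dotv (grad g (x + s *: v)) v)
    (dotv v (hess g x *m v)).
Proof.
move=> dg.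
have -> : (fun s : R => dotv (grad g (x + s *: v)) v) =
          \sum_(i < m) (fun s : R => v i ord0 * grad g (x + s *: v) i ord0).
  by apply/funext => s; rewrite fct_sumE; apply: eq_bigr => i _; rewrite mulrC.
have -> : dotv v (hess g x *m v) =
          \sum_(i < m) v i ord0 * 'D_v (fun y => grad g y i ord0) x.
  apply: eq_bigr => i _; rewrite derive_grad // mxE.
  by congr (_ * _); apply: eq_bigr => j _; rewrite !mxE.
apply: is_derive_sum => i; apply: is_deriveZ.
by have := @is_derive_line _ x v 0; rewrite scale0r addr0; apply; apply: diff_derivable.
Qed.

End DerivativesAlongLines.

Section OneVariable.
Variables (R : realType) (k k' : R -> R) (b : R).
Hypotheses (hk : forall t, is_derive t (1 : R) k (k' t)) (k0 : k 0 = 0)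
  (k'0 : k' 0 <= 0) (hk' : is_derive (0 : R) (1 : R) k' b) (b0 : b < 0).

Lemma derive_lt0_near0 : exists2 e, 0 < e & forall h, 0 < h < e -> k' h < 0.
Proof.
have := @cvgr_lt R R _ _ _ ('D_1 k' 0) (@ex_derive _ _ _ _ _ _ _ hk').
rewrite derive_val => /(_ _ 0 b0) /nbhs_ballP[e e0 He].
exists e => // h /andP[h0 he].
have : ball (0 : R) e h by rewrite /ball /= sub0r normrN gtr0_norm.
move/He => /(_ (lt0r_neq0 h0)); rewrite /= addr0 [_%:A]mulr1.
by rewrite pmulr_rlt0 ?invr_gt0 // subr_lt0 => /lt_le_trans; apply.
Qed.

Lemma lt0_near0 T : 0 < T -> exists2 e, 0 < e < T & k e < 0.
Proof.
move=> T0; have [e e0 k'_lt0] := derive_lt0_near0.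
pose e1 := Num.min e T / 2.
have e10 : 0 < e1 by rewrite divr_gt0 // lt_min e0.
have e1_lt : e1 < Num.min e T by rewrite ltr_pdivrMr // ltr_pMr ?ltr1n // lt_min e0.
have [e1e e1T] : e1 < e /\ e1 < T by move: e1_lt; rewrite lt_min => /andP.
exists e1; first by rewrite e10.
have [c /[1!in_itv] /= /andP[c0 c1] mvt] := MVT e10 (fun x _ => hk x)
   (derivable_within_continuous (fun x _ => @ex_derive _ _ _ _ _ _ _ (hk x))).
move: mvt; rewrite k0 !subr0 => ->.
by rewrite pmulr_llt0 // k'_lt0 // c0 (lt_trans c1).
Qed.

Lemma lt0_on_rootfree T :
  (forall c, 0 < c < T -> k c != 0) -> forall t, 0 < t < T -> k t < 0.
Proof.
move=> noroot t /andP[t0 tT]; rewrite ltNge le_eqVlt negb_or eq_sym noroot ?t0 //=.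
apply/negP => kt_gt0.
have [e /andP[e0 et] ke] := lt0_near0 t0.
have sign_change : Num.min (k e) (k t) <= 0 <= Num.max (k e) (k t).
  by rewrite ge_min le_max (ltW ke) (ltW kt_gt0) orbT.
have [c /[1!in_itv] /= /andP[ec ct] /eqP] := IVT (ltW et)
  (derivable_within_continuous (fun u _ => @ex_derive _ _ _ _ _ _ _ (hk u)))
  sign_change.
by apply/negP/noroot; rewrite (lt_le_trans e0) ?(le_lt_trans ct).
Qed.

End OneVariable.

Section Backtracking.
Variables (R : realType) (theta T : R) (accept : nat -> Prop).
Hypotheses (htheta : 0 < theta < 1) (hT : 0 < T)
  (hacc : forall j, theta ^+ j < T -> accept j).

Lemma backtracking_stops : exists j, accept j.
Proof.
have [th0 th1] := andP htheta.
have := @cvgr_lt R nat _ _ _ 0 (cvg_expr (_ : `|theta| < 1)).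
rewrite gtr0_norm // => /(_ _ th1 T hT) /filter_ex[j hj].
by exists j; apply: hacc.
Qed.

Lemma backtracking_step_lb jk : (forall j, (j < jk)%N -> ~ accept j) ->
  theta ^+ 2 * Num.min 1 (T ^+ 2) <= theta ^+ (2 * jk).
Proof.
move=> hmin; have [th0 th1] := andP htheta.
have th2_ge0 : 0 <= theta ^+ 2 by rewrite exprn_ge0 // ltW.
case: jk hmin => [|j] hmin.
  by rewrite expr0 mulr_ile1 ?ge_min ?lexx // ?le_min ?ler01 ?sqr_ge0 // exprn_ile1 // ltW.
have Tj : T <= theta ^+ j by rewrite leNgt; apply/negP => /hacc; apply: hmin.
rewrite mulnS exprD ler_wpM2l // mulnC exprM ge_min; apply/orP; right.
by rewrite ler_sqr ?nnegrE ?(ltW hT) ?exprn_ge0 ?(ltW th0).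
Qed.

End Backtracking.

Section CappedCGNegativeCurvature.
Variables (R : realType) (m : nat) (H : 'M[R]_m) (g : 'cV[R]_m)
  (eps zeta delta taubar : R).

Lemma ccg_run_NC s d : ccg_run H g eps zeta delta taubar s d NC ->
  ccg_nc H g eps delta taubar d.
Proof. by move Et : NC => t run; elim: run Et. Qed.

Lemma capped_cg_NC M0 d : capped_cg H g eps zeta delta taubar M0 d NC ->
  ccg_nc H g eps delta taubar d.
Proof. by case=> [[? [-> _]] | [_ /ccg_run_NC]]. Qed.

Lemma capped_cg_NC_curvature M0 d :
  2 * eps <= ccg_shift g delta taubar ->
  capped_cg H g eps zeta delta taubar M0 d NC ->
  dotv d (H *m d) < - eps * enorm d ^+ 2.
Proof.
move=> hshift /capped_cg_NC.
rewrite /ccg_nc /ccg_Hbar mulmxDl mul_scalar_mx dotvDr dotvZr -enorm_sqr => hnc.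
have : 2 * eps * enorm d ^+ 2 <= ccg_shift g delta taubar * enorm d ^+ 2.
  by rewrite ler_wpM2r ?sqr_ge0.
lra.
Qed.

End CappedCGNegativeCurvature.

Section NegativeCurvatureScaling.
Variables (R : realType) (m : nat) (A : 'M[R]_m) (d : 'cV[R]_m) (eps sigma : R).
Let q := dotv d (A *m d).
Let D := enorm d.
Hypotheses (heps : 0 <= eps) (hq : q < - eps * D ^+ 2) (hsigma : `|sigma| = 1).
Let w := (sigma * (`|q| / D ^+ 2 / D)) *: d.

Let q_lt0 : q < 0.
Proof. by apply: lt_le_trans hq _; rewrite mulNr oppr_le0 mulr_ge0 ?sqr_ge0. Qed.

Let D_gt0 : 0 < D.
Proof.
rewrite lt_neqAle enorm_ge0 andbT eq_sym; apply/eqP => /enorm_eq0 d0.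
by move: q_lt0; rewrite /q d0 dotv0l ltxx.
Qed.

Lemma enorm_nc_scaled : enorm w = `|q| / D ^+ 2.
Proof.
rewrite enormZ normrM hsigma mul1r ger0_norm ?divr_ge0 ?sqr_ge0 ?enorm_ge0 //.
by rewrite -/D mulfVK // gt_eqF.
Qed.

Lemma nc_scaled_gt : eps < enorm w.
Proof.
rewrite enorm_nc_scaled ltr_pdivlMr ?exprn_gt0 // ltr0_norm // ltrNr -mulNr.
exact: hq.
Qed.

Lemma curvature_nc_scaled : dotv w (A *m w) = - enorm w ^+ 3.
Proof.
have sigma2 : sigma ^+ 2 = 1 by rewrite -real_normK ?num_real // hsigma expr1n.
rewrite enorm_nc_scaled -scalemxAr dotvZl dotvZr -/q ltr0_norm //.
have D0 : D != 0 by rewrite gt_eqF.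
transitivity (sigma ^+ 2 * ((- q / D ^+ 2 / D) ^+ 2 * q)); first by ring.
by rewrite sigma2 mul1r; field.
Qed.

End NegativeCurvatureScaling.

Lemma dotv_sgn_scaled_le0 (R : realType) (m : nat) (g d : 'cV[R]_m) (c : R) :
  0 <= c -> dotv g ((- sgn (dotv d g) * c) *: d) <= 0.
Proof.
move=> c0; rewrite dotvZr [dotv g d]dotvC.
have -> : (- sgn (dotv d g) * c) * dotv d g = - (c * (sgn (dotv d g) * dotv d g)).
  by ring.
by rewrite sgn_mul oppr_le0 mulr_ge0.
Qed.

Section NegativeCurvatureDirection.
Variables (R : realType) (n : nat) (I : {set 'I_n}) (A : 'M[R]_n) (g v : 'cV[R]_n)
  (d : 'cV[R]_#|I|) (eps : R).
Hypotheses (heps : 0 <= eps)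
  (hd : dotv d (submx_sq I A *m d) < - eps * enorm d ^+ 2)
  (hsupp : supported I v)
  (hv : subvec I v =
        (- sgn (dotv d (subvec I g)) * (`|dotv d (submx_sq I A *m d)| / enorm d ^+ 2)
         / enorm d) *: d).

Let sigma := - sgn (dotv d (subvec I g)).
Let c := `|dotv d (submx_sq I A *m d)| / enorm d ^+ 2 / enorm d.

Let hsigma : `|sigma| = 1.
Proof. by rewrite normrN normr_sgn. Qed.

Let hvc : subvec I v = (sigma * c) *: d.
Proof. by rewrite hv -mulrA. Qed.

Lemma nc_direction_gt : eps < enorm v.
Proof. by rewrite -(enorm_subvec hsupp) hvc (nc_scaled_gt heps hd hsigma). Qed.

Lemma nc_direction_curvature : dotv v (A *m v) = - enorm v ^+ 3.
Proof.
rewrite -(curvature_subvec _ hsupp) -(enorm_subvec hsupp) hvc.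
exact: curvature_nc_scaled heps hd hsigma.
Qed.

Lemma nc_direction_descent : dotv g v <= 0.
Proof.
rewrite -(dotv_subvec _ hsupp) hvc dotv_sgn_scaled_le0 //.
by rewrite !divr_ge0 ?exprn_ge0 ?enorm_ge0.
Qed.

End NegativeCurvatureDirection.

Definition nc_radius (R : realType) (LH eta epsg N : R) : R :=
  Num.min (3 * (1 - 2 * eta) / LH) (Num.sqrt epsg / N).

Section NegativeCurvatureLine.
Variables (R : realType) (n : nat) (f : 'cV[R]_n -> R) (lam : R)
  (x0 x v : 'cV[R]_n) (LH epsg eta : R).
Hypotheses (hdf : forall y, differentiable f y)
  (hdg : forall i, differentiable (fun y => grad f y i ord0) x)
  (hx : levelset f lam x0 x)
  (hmodel : forall y, levelset f lam x0 y ->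
      f y <= f x + dotv (grad f x) (y - x)
             + 2^-1 * dotv (y - x) (hess f x *m (y - x))
             + LH / 6 * enorm (y - x) ^+ 3)
  (hsupp : supported (Inz_eps epsg x) v)
  (hslope : dotv (grad f x) v + lam * l1slope x v <= 0)
  (hcurv : dotv v (hess f x *m v) = - enorm v ^+ 3)
  (hv : 0 < enorm v) (hLH : 0 < LH) (heta : 0 <= eta).

Let N := enorm v.
Let s := l1slope x v.
Let T := nc_radius LH eta epsg N.

(* [K t] is the increase [phi (x + t v) - phi x] for small [t] (see [phi_line]),
   but unlike it is smooth on the whole line. *)
Let K t := f (x + t *: v) - f x + lam * s * t.
Let K' t := dotv (grad f (x + t *: v)) v + lam * s.

Let phi_line t : `|t| * N < Num.sqrt epsg ->
  phi f lam (x + t *: v) - phi f lam x = K t.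
Proof.
move=> small; rewrite /phi l1norm_line; first by rewrite /K /s; ring.
move=> i vi0; have hi : i \in Inz_eps epsg x.
  by apply/negPn/negP => /hsupp vi; rewrite vi eqxx in vi0.
have vN : `|t| * `|v i ord0| <= `|t| * N by rewrite ler_wpM2l ?coord_le_enorm.
by move: hi; rewrite inE normrM; apply/lt_trans/(le_lt_trans vN).
Qed.

Let is_derive_K t : is_derive t (1 : R) K (K' t).
Proof.
rewrite (_ : K = (fun u => f (x + u *: v)) - cst (f x) + (lam * s) \*: id).
  apply: is_derive_eq.
    by apply: is_deriveD; apply: is_deriveB; exact: is_derive_line_grad.
  by rewrite /K' subr0 [_%:A]mulr1.
by apply/funext => u.
Qed.

Let is_derive_K' : is_derive (0 : R) (1 : R) K' (- N ^+ 3).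
Proof.
rewrite (_ : K' = (fun u => dotv (grad f (x + u *: v)) v) + cst (lam * s)).
  apply: is_derive_eq; first by apply: is_deriveD; exact: is_derive_line_hess.
  by rewrite addr0 hcurv.
by apply/funext => u.
Qed.

Let model_lt t : 0 < t -> LH * t < 3 * (1 - 2 * eta) ->
  levelset f lam x0 (x + t *: v) -> K t < - (eta * t ^+ 2 * N ^+ 3).
Proof.
move=> t0 tLH /hmodel.
have -> : x + t *: v - x = t *: v by rewrite addrAC subrr add0r.
rewrite -scalemxAr dotvZr dotvZl dotvZr.
rewrite hcurv enormZ gtr0_norm // -/N => hf.
have slope_t : t * (dotv (grad f x) v + lam * s) <= 0 by rewrite pmulr_rle0.
have X0 : 0 < t ^+ 2 * N ^+ 3 by rewrite mulr_gt0 ?exprn_gt0.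
have cubic : t ^+ 2 * N ^+ 3 * (LH * t) < t ^+ 2 * N ^+ 3 * (3 * (1 - 2 * eta)).
  by rewrite ltr_pM2l.
have -> : K t = f (x + t *: v) - f x + lam * s * t by [].
set X := t ^+ 2 * N ^+ 3 in X0 cubic.
have -> : - (eta * t ^+ 2 * N ^+ 3) = - (eta * X) by rewrite /X; ring.
have : 2^-1 * (t * (t * - N ^+ 3)) + LH / 6 * (t * N) ^+ 3 = X * (LH * t) / 6 - X / 2.
  by rewrite /X; field.
nra.
Qed.

Let radius_small c :
  0 < c < T -> `|c| * N < Num.sqrt epsg /\ LH * c < 3 * (1 - 2 * eta).
Proof.
move=> /andP[c0]; rewrite lt_min gtr0_norm // => /andP[cLH cN].
by split; [rewrite -ltr_pdivlMr | rewrite mulrC -ltr_pdivlMr].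
Qed.

Let level_of_K_le0 c : 0 < c < T -> K c <= 0 -> levelset f lam x0 (x + c *: v).
Proof.
move=> /radius_small[cN _] Kc; rewrite /levelset /=; apply: le_trans hx.
by rewrite -subr_le0 phi_line.
Qed.

Lemma phi_nc_line_lt t : 0 < t < nc_radius LH eta epsg (enorm v) ->
  phi f lam (x + t *: v) < phi f lam x - eta * t ^+ 2 * enorm v ^+ 3.
Proof.
move=> tT; have [tN tLH] := radius_small tT; have [t0 _] := andP tT.
have bound_le0 c : - (eta * c ^+ 2 * N ^+ 3) <= 0.
  by rewrite oppr_le0 (mulr_ge0 (mulr_ge0 heta (sqr_ge0 c))) ?exprn_ge0 ?enorm_ge0.
have K_lt0 : K t < 0.
  apply: (lt0_on_rootfree is_derive_K _ _ is_derive_K') tT.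
  - by rewrite /K scale0r addr0 subrr mulr0 addr0.
  - by rewrite /K' scale0r addr0.
  - by rewrite oppr_lt0 exprn_gt0.
  move=> c cT; apply/eqP => Kc.
  have [c0 _] := andP cT; have [_ cLH] := radius_small cT.
  have Kc_le0 : K c <= 0 by rewrite Kc.
  have := model_lt c0 cLH (level_of_K_le0 cT Kc_le0).
  by rewrite Kc => /lt_le_trans/(_ (bound_le0 c)); rewrite ltxx.
have := model_lt t0 tLH (level_of_K_le0 tT (ltW K_lt0)).
rewrite -phi_line // -/N; lra.
Qed.

Lemma phi_nc_line_armijo eps t : eps <= enorm v ->
  0 < t < nc_radius LH eta epsg (enorm v) ->
  phi f lam (x + t *: v) < phi f lam x - eta * t ^+ 2 * eps * enorm v ^+ 2.
Proof.
move=> epsN /phi_nc_line_lt /lt_le_trans; apply.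
rewrite lerD2l lerN2 -mulrA (exprS _ 2).
apply: ler_wpM2l; first by rewrite mulr_ge0 // sqr_ge0.
by apply: ler_wpM2r; first exact: sqr_ge0.
Qed.

End NegativeCurvatureLine.

Lemma nc_radius_gt0 (R : realType) (LH eta epsg N : R) :
  0 < LH -> 0 < 1 - 2 * eta -> 0 < epsg -> 0 < N -> 0 < nc_radius LH eta epsg N.
Proof.
move=> hLH heta2 hepsg hN; rewrite lt_min; apply/andP; split; apply: divr_gt0 => //.
- by rewrite mulr_gt0 ?ltr0n.
- by rewrite sqrtr_gt0.
Qed.

Lemma nc_radius_sqr_lb (R : realType) (LH eta epsg epsh N : R) :
  0 <= epsg -> 0 < epsh -> epsh < N ->
  Num.min 1 (9 * (1 - 2 * eta) ^+ 2 / LH ^+ 2) * Num.min (epsg * epsh) (epsh ^+ 3)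
    <= Num.min 1 (nc_radius LH eta epsg N ^+ 2) * (epsh * N ^+ 2).
Proof.
move=> hepsg hepsh hN.
set m1 := Num.min 1 _; set m2 := Num.min _ (epsh ^+ 3).
have m1_ge0 : 0 <= m1.
  by rewrite le_min ler01 /= divr_ge0 ?sqr_ge0 // mulr_ge0 ?sqr_ge0.
have m1_le1 : m1 <= 1 by rewrite ge_min lexx.
have m2_ge0 : 0 <= m2 by rewrite le_min mulr_ge0 ?exprn_ge0 ?(ltW hepsh).
have m2_le_g : m2 <= epsg * epsh by rewrite ge_min lexx.
have m2_le_N : m2 <= epsh * N ^+ 2.
  have cube_le : epsh ^+ 3 <= epsh * N ^+ 2.
    rewrite (exprS epsh 2) ler_wpM2l ?(ltW hepsh) //.
    by rewrite ler_sqr ?nnegrE ?(ltW hepsh) ?(ltW hN) ?(ltW (lt_trans hepsh hN)).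
  by apply: le_trans cube_le; rewrite ge_min lexx orbT.
have m1m2_le c : m1 <= c -> 0 <= c -> m1 * m2 <= c * (epsh * N ^+ 2).
  by move=> m1c c0; rewrite ler_pM.
rewrite /nc_radius; case: (leP 1) => _; first exact: m1m2_le m1_le1 ler01.
rewrite /Num.min; case: ifP => _.
  apply: m1m2_le; last exact: sqr_ge0.
  by rewrite /m1 ge_min expr_div_n exprMn -natrX lexx orbT.
have N_neq0 : N != 0 by rewrite gt_eqF // (lt_trans hepsh).
have -> : (Num.sqrt epsg / N) ^+ 2 * (epsh * N ^+ 2) = epsg * epsh.
  by rewrite expr_div_n sqr_sqrtr //; field.
by apply: le_trans m2_le_g; rewrite ler_piMl.
Qed.

Lemma nc_decrease_lb (R : realType) (LH eta theta epsg epsh N b : R) :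
  0 <= eta -> 0 <= epsg -> 0 < epsh -> epsh < N ->
  theta ^+ 2 * Num.min 1 (nc_radius LH eta epsg N ^+ 2) <= b ->
  eta * theta ^+ 2 * Num.min 1 (9 * (1 - 2 * eta) ^+ 2 / LH ^+ 2)
      * Num.min (epsg * epsh) (epsh ^+ 3)
    <= eta * b * epsh * N ^+ 2.
Proof.
move=> eta0 hepsg hepsh hN hb.
set m1 := Num.min 1 _; set m2 := Num.min _ (epsh ^+ 3).
have Y_ge0 : 0 <= epsh * N ^+ 2 by rewrite mulr_ge0 ?sqr_ge0 ?ltW.
have -> : eta * theta ^+ 2 * m1 * m2 = eta * (theta ^+ 2 * (m1 * m2)) by ring.
have -> : eta * b * epsh * N ^+ 2 = eta * (b * (epsh * N ^+ 2)) by ring.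
rewrite (ler_wpM2l eta0) //; apply: le_trans (ler_wpM2r Y_ge0 hb).
rewrite -[X in _ <= X]mulrA ler_wpM2l ?sqr_ge0 //; exact: nc_radius_sqr_lb.
Qed.

Unset Implicit Arguments.

Theorem lemma9 (R : realType) (n : nat) (lam : R) (f : 'cV[R]_n -> R)
  (x0 : 'cV[R]_n)
  (* problem assumptions *)
  (hlam : 0 < lam)
  (hf : C2 f)
  (hbnd : exists B : R, forall x, levelset f lam x0 x -> enorm x <= B)
  (hlip : exists (U : set 'cV[R]_n) (LU : R),
      [/\ open U, (levelset f lam x0 `<=` U)%classic &
          forall x y, U x -> U y ->
            opnorm_le (hess f x - hess f y) (LU * enorm (x - y))])
  (* the constants L_g, L_H *)
  (Lg LH : R) (hLg : 0 < Lg) (hLH : 0 < LH)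
  (hLgb : forall x, levelset f lam x0 x -> opnorm_le (hess f x) Lg)
  (hLHb : forall x y, levelset f lam x0 x -> levelset f lam x0 y ->
      f y <= f x + dotv (grad f x) (y - x)
             + 2^-1 * dotv (y - x) (hess f x *m (y - x))
             + LH / 6 * enorm (y - x) ^+ 3)
  (* algorithm parameters *)
  (epsg epsh delta tauhat zeta eta theta : R)
  (hepsg : 0 < epsg < 1) (hepsh : 0 < epsh < 1)
  (hdelta : 0 <= delta <= 1) (htauhat : 1 <= tauhat)
  (hzeta : 0 < zeta < 1) (heta : 0 < eta < (1 - zeta) / 2)
  (htheta : 0 < theta < 1)
  (* the current iterate x^k, which lies in the level set *)
  (xk : 'cV[R]_n) (hxk : levelset f lam x0 xk)
  (* the Newton-CG step is invoked at x^k *)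
  (hinv0 : I0eps epsg xk = finset.set0 \/
           forall i, i \in I0eps epsg xk -> geps f lam epsg xk i ord0 = 0)
  (hinv1 : Inz_eps epsg xk != finset.set0)
  (hinv2 : epsg < enorm (subvec (Inz_eps epsg xk) (geps f lam epsg xk)))
  (* tau_k and the input M of Capped CG *)
  (tauk M : R)
  (htauk : 2 * epsh / powR (enorm (subvec (Inz_eps epsg xk)
                                     (geps f lam epsg xk))) delta <= tauk
           <= 2 * tauhat * epsh / powR (enorm (subvec (Inz_eps epsg xk)
                                     (geps f lam epsg xk))) delta)
  (hM : 0 <= M)
  (* Capped CG returns d with d_type = NC *)
  (d : 'cV[R]_#|Inz_eps epsg xk|)
  (hccg : capped_cg (submx_sq (Inz_eps epsg xk) (hess f xk))
            (subvec (Inz_eps epsg xk) (geps f lam epsg xk))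
            epsh zeta delta tauk M d NC)
  (* the direction d^k *)
  (dk : 'cV[R]_n)
  (hdk0 : forall i, i \in I0eps epsg xk -> dk i ord0 = 0)
  (hdk1 : subvec (Inz_eps epsg xk) dk =
          (- sgn (dotv d (subvec (Inz_eps epsg xk) (geps f lam epsg xk)))
           * (`|dotv d (submx_sq (Inz_eps epsg xk) (hess f xk) *m d)|
              / enorm d ^+ 2) / enorm d) *: d) :
  let accept (j : nat) :=
    phi f lam (xk + theta ^+ j *: dk)
      < phi f lam xk - eta * theta ^+ (2 * j) * epsh * enorm dk ^+ 2 in
  let cnc := eta * theta ^+ 2 * Num.min 1 (9 * (1 - 2 * eta) ^+ 2 / LH ^+ 2) in
  (exists j, accept j) /\
  (forall jk : nat, accept jk -> (forall j, (j < jk)%N -> ~ accept j) ->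
     cnc * Num.min (epsg * epsh) (epsh ^+ 3)
       <= phi f lam xk - phi f lam (xk + theta ^+ jk *: dk)).
Proof.
move=> accept cnc; case: hf => hdf hdg _.
set I := Inz_eps epsg xk; set N := enorm dk.
have [epsg0 _] := andP hepsg; have [epsh0 _] := andP hepsh.
have eta0 : 0 <= eta by case/andP: heta => /ltW.
have heta2 : 0 < 1 - 2 * eta.
  by have [_ ?] := andP heta; have [? ?] := andP hzeta; lra.
have hsupp : supported I dk.
  by move=> i; rewrite inE -leNgt => hi; apply: hdk0; rewrite inE.
have curv_d : dotv d (submx_sq I (hess f xk) *m d) < - epsh * enorm d ^+ 2.
  apply: capped_cg_NC_curvature hccg; have [lo _] := andP htauk.
  by rewrite /ccg_shift -ler_pdivrMr // powR_gt0 // (lt_trans epsg0 hinv2).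
have epsh_lt_N := nc_direction_gt (ltW epsh0) curv_d hsupp hdk1.
have hcurv := nc_direction_curvature (ltW epsh0) curv_d hsupp hdk1.
have hslope : dotv (grad f xk) dk + lam * l1slope xk dk <= 0.
  by rewrite -(dotv_geps f lam hsupp) (nc_direction_descent hsupp hdk1).
have N0 : 0 < N := lt_trans epsh0 epsh_lt_N.
have T0 := nc_radius_gt0 hLH heta2 epsg0 N0.
have hacc j : theta ^+ j < nc_radius LH eta epsg N -> accept j.
  move=> hj; rewrite /accept mulnC exprM.
  apply: (phi_nc_line_armijo hdf (hdg^~ xk) hxk (fun y => hLHb xk y hxk) hsupp hslope
            hcurv N0 hLH eta0 (ltW epsh_lt_N)).
  by rewrite hj exprn_gt0 //; case/andP: htheta.
split; first exact: backtracking_stops htheta T0 hacc.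
move=> jk hjk /(backtracking_step_lb htheta T0 hacc) step_lb.
apply: le_trans (nc_decrease_lb eta0 (ltW epsg0) epsh0 epsh_lt_N step_lb) _.
by move: hjk; rewrite /accept -/N; lra.
Qed.
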